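(* Let $\mathbf E$ be a topos with enough weakly contractible objects. Then $\mathbf E$ is transfinite.
   Context: An object $C$ of a topos $\mathbf E$ is weakly contractible if every epimorphism $D\to C$ in $\mathbf E$ splits, i.e. there is $C\to D$ whose composite with $D\to C$ is the identity. $\mathbf E$ has enough weakly contractible objects if for every object $C$ there is an epimorphism $D\to C$ with $D$ weakly contractible. For an ordinal $\lambda$, a $\lambda$-tower is a functor $(E_i)_{i<\lambda}:\lambda^{\rm op}\to\mathbf E$ such that for every limit ordinal $\mu<\lambda$ the natural map $E_\mu\to\lim_{i<\mu}E_i$ is an isomorphism. $\mathbf E$ is $\alpha$-transfinite ($\alpha$ an infinite cardinal) if for every ordinal $\lambda\le\alpha$ and every $\lambda$-tower with $E_{i+1}\to E_i$ an epimorphism for all $1\le i+1<\lambda$, the morphism $\lim_{i<\lambda}E_i\to E_0$ is an epimorphism; $\mathbf E$ is transfinite if it is $\alpha$-transfinite for all cardinals $\alpha$. *)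

Set Implicit Arguments.
Unset Strict Implicit.

Record Category := {
  Ob :> Type;
  Hom : Ob -> Ob -> Type;
  cid : forall X, Hom X X;
  comp : forall X Y Z, Hom Y Z -> Hom X Y -> Hom X Z;
  comp_id_l : forall X Y (f : Hom X Y), comp (cid Y) f = f;
  comp_id_r : forall X Y (f : Hom X Y), comp f (cid X) = f;
  comp_assoc : forall X Y Z W (h : Hom Z W) (g : Hom Y Z) (f : Hom X Y),
      comp h (comp g f) = comp (comp h g) f
}.

Arguments Hom {c} _ _.
Arguments cid {c} _.
Arguments comp {c X Y Z} _ _.
Notation "g \o f" := (comp g f) (at level 40, left associativity).

Section Cat.
Variable C : Category.

Definition epi {X Y : C} (f : Hom X Y) : Prop :=
  forall Z (u v : Hom Y Z), u \o f = v \o f -> u = v.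

Definition mono {X Y : C} (f : Hom X Y) : Prop :=
  forall Z (u v : Hom Z X), f \o u = f \o v -> u = v.

Definition is_terminal (T : C) : Prop :=
  forall X : C, exists t : Hom X T, forall t' : Hom X T, t' = t.

Definition is_pullback {X Y Z P : C} (f : Hom X Z) (g : Hom Y Z)
    (p1 : Hom P X) (p2 : Hom P Y) : Prop :=
  f \o p1 = g \o p2 /\
  forall Q (q1 : Hom Q X) (q2 : Hom Q Y), f \o q1 = g \o q2 ->
    exists m : Hom Q P, (p1 \o m = q1 /\ p2 \o m = q2) /\
      forall m' : Hom Q P, p1 \o m' = q1 -> p2 \o m' = q2 -> m' = m.

Definition has_terminal : Prop := exists T : C, is_terminal T.

Definition has_pullbacks : Prop :=
  forall X Y Z (f : Hom X Z) (g : Hom Y Z),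
    exists P (p1 : Hom P X) (p2 : Hom P Y), is_pullback f g p1 p2.

(** Local cartesian closedness, phrased via dependent products: for
    [f : I -> J], every object [a : A -> I] over [I] has a dependent
    product [b : B -> J] over [J] with an evaluation map
    [ev : f^*(B) -> A] over [I], universal among such data. *)
Definition locally_cartesian_closed : Prop :=
  forall I J (f : Hom I J) A (a : Hom A I),
    exists B (b : Hom B J) P (q1 : Hom P B) (q2 : Hom P I) (ev : Hom P A),
      is_pullback b f q1 q2 /\ a \o ev = q2 /\
      forall Cc (c : Hom Cc J) Q (s1 : Hom Q Cc) (s2 : Hom Q I) (h : Hom Q A),
        is_pullback c f s1 s2 -> a \o h = s2 ->
        exists k : Hom Cc B,
          (b \o k = c /\
           forall m : Hom Q P, q1 \o m = k \o s1 -> q2 \o m = s2 -> ev \o m = h) /\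
          forall k' : Hom Cc B, b \o k' = c ->
            (forall m : Hom Q P, q1 \o m = k' \o s1 -> q2 \o m = s2 -> ev \o m = h) ->
            k' = k.

Definition has_subobject_classifier : Prop :=
  exists (One Omega : C) (tru : Hom One Omega), is_terminal One /\
    forall A X (m : Hom A X), mono m ->
      exists chi : Hom X Omega,
        (exists t : Hom A One, is_pullback chi tru m t) /\
        forall chi' : Hom X Omega,
          (exists t : Hom A One, is_pullback chi' tru m t) -> chi' = chi.

Definition elementary_topos : Prop :=
  has_terminal /\ has_pullbacks /\ locally_cartesian_closed /\
  has_subobject_classifier.

Definition has_small_coproducts : Prop :=
  forall (I : Type) (X : I -> C),
    exists (S : C) (inj : forall i, Hom (X i) S),
      forall Z (g : forall i, Hom (X i) Z),
        exists u : Hom S Z, (forall i, u \o inj i = g i) /\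
          forall u' : Hom S Z, (forall i, u' \o inj i = g i) -> u' = u.

Definition has_generating_family : Prop :=
  exists (K : Type) (G : K -> C),
    forall X Y (f g : Hom X Y),
      (forall k (x : Hom (G k) X), f \o x = g \o x) -> f = g.

(** Grothendieck topos (Giraud's characterization): an elementary topos
    with all small coproducts and a small set of generators. *)
Definition topos : Prop :=
  elementary_topos /\ has_small_coproducts /\ has_generating_family.

Definition weakly_contractible (X : C) : Prop :=
  forall D (p : Hom D X), epi p -> exists s : Hom X D, p \o s = cid X.

Definition enough_weakly_contractible : Prop :=
  forall X : C, exists D (p : Hom D X), epi p /\ weakly_contractible D.
End Cat.

Record Ordinal := {
  oT :> Type;
  olt : oT -> oT -> Prop;
  olt_trans : forall x y z, olt x y -> olt y z -> olt x z;
  olt_irrefl : forall x, ~ olt x x;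
  olt_total : forall x y, olt x y \/ x = y \/ olt y x;
  olt_wf : well_founded olt
}.
Arguments olt {o} _ _.

Section Towers.
Variable C : Category.
Variable L : Ordinal.

Definition is_succ (i j : L) : Prop :=
  olt i j /\ forall k, olt i k -> olt k j -> False.

Definition is_least (i : L) : Prop := forall j : L, ~ olt j i.

Definition is_limit (m : L) : Prop :=
  ~ is_least m /\ forall i, ~ is_succ i m.

(** A functor [L^op -> C]. *)
Record diagram := {
  dob :> L -> C;
  dmap : forall i j : L, olt j i -> Hom (dob i) (dob j);
  dmap_comp : forall i j k (hij : olt j i) (hjk : olt k j) (hik : olt k i),
      dmap hjk \o dmap hij = dmap hik
}.

Definition is_limit_below (E : diagram) (m : L) (X : C)
    (p : forall i, olt i m -> Hom X (E i)) : Prop :=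
  (forall i j (hi : olt i m) (hj : olt j m) (hji : olt j i),
      dmap E hji \o p i hi = p j hj) /\
  forall Y (q : forall i, olt i m -> Hom Y (E i)),
    (forall i j (hi : olt i m) (hj : olt j m) (hji : olt j i),
        dmap E hji \o q i hi = q j hj) ->
    exists u : Hom Y X, (forall i hi, p i hi \o u = q i hi) /\
      forall u' : Hom Y X, (forall i hi, p i hi \o u' = q i hi) -> u' = u.

Definition is_limit_cone (E : diagram) (X : C) (p : forall i, Hom X (E i)) : Prop :=
  (forall i j (hji : olt j i), dmap E hji \o p i = p j) /\
  forall Y (q : forall i, Hom Y (E i)),
    (forall i j (hji : olt j i), dmap E hji \o q i = q j) ->
    exists u : Hom Y X, (forall i, p i \o u = q i) /\
      forall u' : Hom Y X, (forall i, p i \o u' = q i) -> u' = u.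

End Towers.
Arguments is_limit_below {C L} E m X p.
Arguments is_limit_cone {C L} E X p.

Definition is_tower {C : Category} {L : Ordinal} (E : diagram C L) : Prop :=
  forall m : L, is_limit m -> is_limit_below E m (E m) (fun i h => dmap E h).

Definition transfinite (C : Category) : Prop :=
  forall (L : Ordinal) (E : diagram C L), is_tower E ->
    (forall (i j : L) (h : olt i j), is_succ i j -> epi (dmap E h)) ->
    forall (X : C) (p : forall i, Hom X (E i)), is_limit_cone E X p ->
      forall i0 : L, is_least i0 -> epi (p i0).

(* Over a weakly contractible object W, covering E_0 by an epimorphism e : W -> E_0,
   one builds a cone x_i : W -> E_i by transfinite recursion: at successors lift
   along the epimorphism E_(i+1) -> E_i, at limit stages use the tower condition.
   Lifting works because in a locally cartesian closed category pullback has a right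
   adjoint and so preserves epimorphisms, which makes weakly contractible objects
   projective. The limit projection to E_0 then has the epimorphism e as a factor. *)
From Stdlib Require Import ClassicalEpsilon FunctionalExtensionality ProofIrrelevance.
Set Implicit Arguments.
Unset Strict Implicit.

Section PullbackStability.
Variable C : Category.

Lemma epi_of_epi_comp (X Y Z : C) (f : Hom X Y) (g : Hom Y Z) :
  epi (g \o f) -> epi g.
Proof.
  intros H W u v E. apply H. rewrite !comp_assoc, E. reflexivity.
Qed.

Lemma terminal_hom_unique (T : C) : is_terminal T ->
  forall X (f g : Hom X T), f = g.
Proof.
  intros HT X f g. destruct (HT X) as [t Ht]. rewrite (Ht f), (Ht g). reflexivity.
Qed.

Lemma pullback_hom_unique (X Y Z P : C) (f : Hom X Z) (g : Hom Y Z)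
    (p1 : Hom P X) (p2 : Hom P Y) :
  is_pullback f g p1 p2 -> forall Q (m m' : Hom Q P),
    p1 \o m = p1 \o m' -> p2 \o m = p2 \o m' -> m = m'.
Proof.
  intros [Hsq Hu] Q m m' H1 H2.
  destruct (Hu Q (p1 \o m') (p2 \o m')) as [m0 [_ Hm0]].
  - rewrite !comp_assoc, Hsq. reflexivity.
  - rewrite (Hm0 m H1 H2), (Hm0 m' eq_refl eq_refl). reflexivity.
Qed.

Lemma is_pullback_id (W B : C) (s : Hom W B) : is_pullback (cid B) s s (cid W).
Proof.
  split; [rewrite comp_id_l, comp_id_r; reflexivity|].
  intros Q x1 x2 Hx. rewrite comp_id_l in Hx.
  exists x2. split; [split; [symmetry; exact Hx | apply comp_id_l]|].
  intros m' _ Hm'. rewrite comp_id_l in Hm'. exact Hm'.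
Qed.

Lemma product_section (T W Z Pr : C) (tW : Hom W T) (tZ : Hom Z T)
    (pr1 : Hom Pr W) (pr2 : Hom Pr Z) :
  is_terminal T -> is_pullback tW tZ pr1 pr2 ->
  forall w : Hom W Z, exists sg : Hom W Pr, pr1 \o sg = cid W /\ pr2 \o sg = w.
Proof.
  intros HT [_ Hu] w.
  destruct (Hu W (cid W) w) as [sg [Hsg _]].
  - apply (terminal_hom_unique HT).
  - exists sg. exact Hsg.
Qed.

Section DependentProduct.
Variables (I J : C) (f : Hom I J) (A : C) (a : Hom A I).
Variables (B : C) (b : Hom B J) (P : C) (q1 : Hom P B) (q2 : Hom P I) (ev : Hom P A).
Hypothesis Hpb : is_pullback b f q1 q2.
Hypothesis Huniv :
  forall Cc (c : Hom Cc J) Q (s1 : Hom Q Cc) (s2 : Hom Q I) (h : Hom Q A),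
    is_pullback c f s1 s2 -> a \o h = s2 ->
    exists k : Hom Cc B,
      (b \o k = c /\
       forall m : Hom Q P, q1 \o m = k \o s1 -> q2 \o m = s2 -> ev \o m = h) /\
      forall k' : Hom Cc B, b \o k' = c ->
        (forall m : Hom Q P, q1 \o m = k' \o s1 -> q2 \o m = s2 -> ev \o m = h) ->
        k' = k.

(* [k : Y -> B] over [J] is the transpose of [h : Q -> A] over [I], where [Q] is
   the pullback of [Y] along [f]. *)
Definition transposes {Y Q : C} (k : Hom Y B) (s1 : Hom Q Y) (s2 : Hom Q I)
    (h : Hom Q A) : Prop :=
  forall m : Hom Q P, q1 \o m = k \o s1 -> q2 \o m = s2 -> ev \o m = h.

Lemma transpose_exists (Y Q : C) (c : Hom Y J) (s1 : Hom Q Y) (s2 : Hom Q I)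
    (h : Hom Q A) :
  is_pullback c f s1 s2 -> a \o h = s2 ->
  exists k : Hom Y B, b \o k = c /\ transposes k s1 s2 h.
Proof.
  intros Hc Hh. destruct (Huniv Hc Hh) as [k [Hk _]]. exists k. exact Hk.
Qed.

Lemma transpose_unique (Y Q : C) (c : Hom Y J) (s1 : Hom Q Y) (s2 : Hom Q I)
    (h : Hom Q A) (k k' : Hom Y B) :
  is_pullback c f s1 s2 -> a \o h = s2 ->
  b \o k = c -> transposes k s1 s2 h -> b \o k' = c -> transposes k' s1 s2 h ->
  k = k'.
Proof.
  intros Hc Hh Hk Hkt Hk' Hkt'. destruct (Huniv Hc Hh) as [k0 [_ Hk0]].
  rewrite (Hk0 k Hk Hkt), (Hk0 k' Hk' Hkt'). reflexivity.
Qed.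

Lemma transposes_inj (Y Q : C) (k : Hom Y B) (s1 : Hom Q Y) (s2 : Hom Q I)
    (h h' : Hom Q A) :
  b \o k \o s1 = f \o s2 -> transposes k s1 s2 h -> transposes k s1 s2 h' -> h = h'.
Proof.
  intros Hsq Hh Hh'. destruct (proj2 Hpb Q (k \o s1) s2) as [m [[Hm1 Hm2] _]].
  - rewrite comp_assoc. exact Hsq.
  - rewrite <- (Hh m Hm1 Hm2), <- (Hh' m Hm1 Hm2). reflexivity.
Qed.

Lemma transposes_comp (Y Q Y' Q' : C) (k : Hom Y B) (s1 : Hom Q Y) (s2 : Hom Q I)
    (h : Hom Q A) (t : Hom Y' Y) (s1' : Hom Q' Y') (r : Hom Q' Q) :
  b \o k \o s1 = f \o s2 -> s1 \o r = t \o s1' ->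
  transposes k s1 s2 h -> transposes (k \o t) s1' (s2 \o r) (h \o r).
Proof.
  intros Hsq Hr Hk m Hm1 Hm2.
  destruct (proj2 Hpb Q (k \o s1) s2) as [m0 [[H01 H02] _]].
  - rewrite comp_assoc. exact Hsq.
  - assert (Em : m = m0 \o r).
    { apply (pullback_hom_unique Hpb).
      - rewrite Hm1, !comp_assoc, H01, <- !comp_assoc, Hr. reflexivity.
      - rewrite Hm2, comp_assoc, H02. reflexivity. }
    rewrite Em, comp_assoc, (Hk m0 H01 H02). reflexivity.
Qed.

End DependentProduct.

(* Pullback along [s] has the right adjoint [Pi_s], hence preserves epimorphisms:
   maps [u : W -> Z] are encoded as sections of [W x Z -> W] and transposed to
   sections of [Pi_s (W x Z) -> B]. *)
Lemma pullback_epi :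
  has_terminal C -> has_pullbacks C -> locally_cartesian_closed C ->
  forall (A B W P : C) (q : Hom A B) (s : Hom W B) (pA : Hom P A) (pW : Hom P W),
    epi q -> is_pullback q s pA pW -> epi pW.
Proof.
  intros [T HT] Hpbs Hlcc A B W P q s pA pW Hq HP Z u v Huv.
  destruct (HT W) as [tW _]. destruct (HT Z) as [tZ _].
  destruct (Hpbs W Z T tW tZ) as [Pr [pr1 [pr2 HPr]]].
  destruct (product_section HT HPr u) as [su [Hsu1 Hsu2]].
  destruct (product_section HT HPr v) as [sv [Hsv1 Hsv2]].
  destruct (Hlcc W B s Pr pr1) as [Pi [b [PP [q1 [q2 [ev [Hpb [_ Huniv]]]]]]]].
  destruct (transpose_exists Huniv (is_pullback_id s) Hsu1) as [ku [Hku Hkut]].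
  destruct (transpose_exists Huniv (is_pullback_id s) Hsv1) as [kv [Hkv Hkvt]].
  assert (Hsquare : forall k : Hom B Pi, b \o k = cid B -> b \o k \o s = s \o cid W).
  { intros k Hk. rewrite Hk, comp_id_l, comp_id_r. reflexivity. }
  assert (Hnat : forall (k : Hom B Pi) (sg : Hom W Pr), b \o k = cid B ->
            transposes q1 q2 ev k s (cid W) sg ->
            transposes q1 q2 ev (k \o q) pA pW (sg \o pW)).
  { intros k sg Hk Hkt.
    pose proof (transposes_comp Hpb (Hsquare k Hk) (eq_sym (proj1 HP)) Hkt) as Ht.
    rewrite comp_id_l in Ht. exact Ht. }
  assert (Esuv : su \o pW = sv \o pW).
  { apply (pullback_hom_unique HPr); rewrite !comp_assoc.
    - rewrite Hsu1, Hsv1. reflexivity.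
    - rewrite Hsu2, Hsv2. exact Huv. }
  assert (Ek : ku = kv).
  { apply Hq. apply (transpose_unique Huniv HP (h := su \o pW)).
    - rewrite comp_assoc, Hsu1. apply comp_id_l.
    - rewrite comp_assoc, Hku. apply comp_id_l.
    - exact (Hnat ku su Hku Hkut).
    - rewrite comp_assoc, Hkv. apply comp_id_l.
    - rewrite Esuv. exact (Hnat kv sv Hkv Hkvt). }
  subst kv. rewrite <- Hsu2, <- Hsv2.
  rewrite (transposes_inj Hpb (Hsquare ku Hku) Hkut Hkvt). reflexivity.
Qed.

Definition projective (W : C) : Prop :=
  forall A B (q : Hom A B), epi q -> forall s : Hom W B, exists x : Hom W A, q \o x = s.

Lemma weakly_contractible_projective (W : C) :
  has_terminal C -> has_pullbacks C -> locally_cartesian_closed C ->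
  weakly_contractible W -> projective W.
Proof.
  intros Ht Hpbs Hlcc HW A B q Hq s.
  destruct (Hpbs A W B q s) as [P [pA [pW HP]]].
  destruct (HW P pW (pullback_epi Ht Hpbs Hlcc Hq HP)) as [t Ht'].
  exists (pA \o t). rewrite comp_assoc, (proj1 HP), <- comp_assoc, Ht'.
  apply comp_id_r.
Qed.

End PullbackStability.

Section ChoiceRecursion.
Variables (L : Ordinal) (F : L -> Type).
Variable Ok : forall i, (forall j, olt j i -> F j) -> F i -> Prop.

Definition restrict i (g : forall j, olt j i -> F j) j (h : olt j i) :
  forall k, olt k j -> F k :=
  fun k hk => g k (olt_trans hk h).

Hypothesis Ok_extend : forall i (g : forall j, olt j i -> F j),
  (forall j (h : olt j i), Ok (restrict g h) (g j h)) -> exists x, Ok g x.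

(* [None] records a stage where the values below do not admit an [Ok] extension;
   the invariant [choice_rec_spec] shows this never happens. *)
Definition choice_step i (r : forall j, olt j i -> option (F j)) : option (F i) :=
  match excluded_middle_informative
          (exists g, (forall j h, r j h = Some (g j h)) /\ exists x, Ok g x) with
  | left H =>
      Some (proj1_sig (constructive_indefinite_description _
                         (proj2 (proj2_sig (constructive_indefinite_description _ H)))))
  | right _ => None
  end.

Definition choice_rec : forall i, option (F i) := Fix (@olt_wf L) _ (@choice_step).

Lemma choice_rec_eq i : choice_rec i = choice_step (fun j _ => choice_rec j).
Proof.
  apply (Fix_eq (@olt_wf L) (fun i => option (F i)) (@choice_step)).
  intros x f g Hfg. f_equal.
  apply functional_extensionality_dep; intro y.
  apply functional_extensionality_dep; intro. apply Hfg.
Qed.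

Lemma choice_rec_spec i : exists y (g : forall j, olt j i -> F j),
  choice_rec i = Some y /\ (forall j h, choice_rec j = Some (g j h)) /\ Ok g y.
Proof.
  induction i as [i IH] using (well_founded_ind (@olt_wf L)).
  set (g := fun j (h : olt j i) =>
              proj1_sig (constructive_indefinite_description _ (IH j h))).
  assert (Hg : forall j h, choice_rec j = Some (g j h)).
  { intros j h. destruct (proj2_sig (constructive_indefinite_description _ (IH j h)))
      as [gj [Hj _]]. exact Hj. }
  assert (Hcoh : forall j (h : olt j i), Ok (restrict g h) (g j h)).
  { intros j h. destruct (IH j h) as [y [gj [Hy [Hgj Hok]]]].
    replace (g j h) with y by (rewrite (Hg j h) in Hy; injection Hy; auto).
    replace (restrict g h) with gj; [exact Hok|].
    apply functional_extensionality_dep; intro k.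
    apply functional_extensionality_dep; intro hk.
    pose proof (Hgj k hk) as E. rewrite (Hg k (olt_trans hk h)) in E.
    injection E. auto. }
  rewrite choice_rec_eq. unfold choice_step.
  destruct excluded_middle_informative as [H | H].
  - set (g' := constructive_indefinite_description _ H).
    set (x := constructive_indefinite_description _ (proj2 (proj2_sig g'))).
    exists (proj1_sig x), (proj1_sig g').
    split; [reflexivity | split; [exact (proj1 (proj2_sig g')) | exact (proj2_sig x)]].
  - exfalso. apply H. exists g. split; [exact Hg | exact (Ok_extend Hcoh)].
Qed.

Theorem choice_recursion : exists f : forall i, F i, forall i, Ok (fun j _ => f j) (f i).
Proof.
  set (f := fun i => proj1_sig (constructive_indefinite_description _ (choice_rec_spec i))).
  assert (Hf : forall i, choice_rec i = Some (f i)).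
  { intro i.
    destruct (proj2_sig (constructive_indefinite_description _ (choice_rec_spec i)))
      as [g [Hi _]].
    exact Hi. }
  exists f. intro i. destruct (choice_rec_spec i) as [y [g [Hy [Hg Hok]]]].
  replace (f i) with y by (rewrite Hf in Hy; injection Hy; auto).
  replace (fun j (_ : olt j i) => f j) with g; [exact Hok|].
  apply functional_extensionality_dep; intro j.
  apply functional_extensionality_dep; intro h.
  pose proof (Hg j h) as E. rewrite Hf in E. injection E. auto.
Qed.

End ChoiceRecursion.

Lemma least_unique (L : Ordinal) (i i' : L) : is_least i -> is_least i' -> i = i'.
Proof.
  intros Hi Hi'. destruct (olt_total i i') as [h | [h | h]].
  - destruct (Hi' i h).
  - exact h.
  - destruct (Hi i' h).
Qed.

Section TowerLifting.
Variables (C : Category) (L : Ordinal) (E : diagram C L) (W : C).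
Hypothesis Htower : is_tower E.
Hypothesis Hsucc : forall (i j : L) (h : olt i j), is_succ i j -> epi (dmap E h).
Hypothesis HW : projective W.

Lemma tower_cone_extend i (g : forall j, olt j i -> Hom W (E j)) :
  ~ is_least i ->
  (forall j k (hj : olt j i) (hk : olt k i) (hkj : olt k j),
     dmap E hkj \o g j hj = g k hk) ->
  exists x : Hom W (E i), forall j (h : olt j i), dmap E h \o x = g j h.
Proof.
  intros Hnl Hg. destruct (classic (exists k, is_succ k i)) as [[k [hki Hk]] | Hns].
  - destruct (HW (Hsucc (h := hki) (conj hki Hk)) (g k hki)) as [x Hx].
    exists x. intros j h. destruct (olt_total j k) as [hjk | [-> | hkj]].
    + rewrite <- (dmap_comp E hki hjk h), <- comp_assoc, Hx. apply Hg.
    + rewrite (proof_irrelevance _ h hki). exact Hx.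
    + destruct (Hk j hkj h).
  - assert (Hlim : is_limit i).
    { split; [exact Hnl|]. intros k Hk. apply Hns. exists k. exact Hk. }
    destruct (proj2 (Htower Hlim) W g) as [x [Hx _]].
    + intros j k hj hk hkj. apply Hg.
    + exists x. exact Hx.
Qed.

Lemma projective_tower_lift (i0 : L) (x0 : Hom W (E i0)) : is_least i0 ->
  exists x : forall i, Hom W (E i),
    (forall i j (h : olt j i), dmap E h \o x i = x j) /\ x i0 = x0.
Proof.
  intros Hi0.
  set (Ok := fun i (g : forall j, olt j i -> Hom W (E j)) (x : Hom W (E i)) =>
         (forall j (h : olt j i), dmap E h \o x = g j h) /\
         forall e : i0 = i, x = eq_rect i0 (fun k => Hom W (E k)) x0 i e).
  destruct (@choice_recursion L (fun i => Hom W (E i)) Ok) as [x Hx].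
  - intros i g Hcoh. destruct (classic (is_least i)) as [Hl | Hnl].
    + pose proof (least_unique Hl Hi0) as ->. exists x0. split.
      * intros j h. destruct (Hi0 j h).
      * intro e. rewrite (proof_irrelevance _ e eq_refl). reflexivity.
    + destruct (tower_cone_extend (g := g) Hnl) as [x Hx].
      * intros j k hj hk hkj. destruct (Hcoh j hj) as [Hc _].
        rewrite (Hc k hkj). unfold restrict. f_equal. apply proof_irrelevance.
      * exists x. split; [exact Hx|]. intros ->. destruct (Hnl Hi0).
  - exists x. split.
    + intros i j h. exact (proj1 (Hx i) j h).
    + exact (proj2 (Hx i0) eq_refl).
Qed.

End TowerLifting.

Theorem proposition3p4 (C : Category) :
  topos C -> enough_weakly_contractible C -> transfinite C.
Proof.
  intros [[Ht [Hpbs [Hlcc _]]] _] Hewc L E Htower Hsucc X p Hlim i0 Hi0.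
  destruct (Hewc (E i0)) as [W [e [He HW]]].
  pose proof (weakly_contractible_projective Ht Hpbs Hlcc HW) as Hproj.
  destruct (projective_tower_lift Htower Hsucc Hproj e Hi0) as [x [Hx Hx0]].
  destruct (proj2 Hlim W x Hx) as [u [Hu _]].
  apply (epi_of_epi_comp (f := u)). rewrite Hu, Hx0. exact He.
Qed.
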